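(* Let $n\geq 3$ and let $L^B$ be a blow-up of the Boolean lattice $L\cong\mathbf{2}^n$. Then: (1) $V(G^c(L^B)_{SR})=V(G^c(L^B))$; (2) for all $x,y\in V(G^c(L^B)_{SR})$ with $x\neq y$ and $[x]=[y]$, $x$ is adjacent to $y$ in $G^c(L^B)_{SR}$; (3) for all $x,y\in V(G^c(L^B)_{SR})$ with $[x]\neq[y]$, $x$ is adjacent to $y$ in $G^c(L^B)_{SR}$ if and only if $x$ is not adjacent to $y$ in $G^c(L^B)$.
   Context: Blow-up: keep $0,1$ of $L=\mathbf{2}^n$ and replace every $x\in L\setminus\{0,1\}$ by a finite nonempty chain $C_x$; within $C_x$ use the chain order, for $a\in C_x,b\in C_y$, $x\neq y$, put $a\leq b$ iff $x\leq y$ in $L$; $0$ is least and $1$ greatest. For $a$ in a lattice with $0$, $a^\perp=\{b: a\wedge b=0\}$; $x\sim y$ iff $x^\perp=y^\perp$, and $[x]$ is the class of $x$. $Z^*(M)$ is the set of nonzero $a$ with $a\wedge b=0$ for some $b\neq 0$; $G^c(M)$ has vertex set $Z^*(M)$, distinct $a,b$ adjacent iff $a\wedge b\neq 0$. In a connected graph, $u$ is maximally distant from $v$ if $d(v,w)\leq d(u,v)$ for all neighbours $w$ of $u$; mutually maximally distant means each is maximally distant from the other. $G_{SR}$ has as vertices those $u$ mutually maximally distant from some $v$, with distinct vertices adjacent iff mutually maximally distant in $G$. *)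

From mathcomp Require Import all_boot.
Set Implicit Arguments. Unset Strict Implicit. Unset Printing Implicit Defensive.

Section LatticeNotions.
Variables (T : finType) (le : rel T) (z : T).

Definition is_meet (a b m : T) : bool :=
  [&& le m a, le m b & [forall c, (le c a && le c b) ==> le c m]].

Definition meet0 (a b : T) : bool := is_meet a b z.

Definition perp (a : T) : {set T} := [set b | meet0 a b].

(* x ~ y iff x^perp = y^perp, i.e. [x] = [y] *)
Definition same_class (x y : T) : bool := perp x == perp y.

Definition Zstar : {set T} :=
  [set a | (a != z) && [exists b, (b != z) && meet0 a b]].

Definition Gc_adj : rel T :=
  fun a b => [&& a \in Zstar, b \in Zstar, a != b & ~~ meet0 a b].
End LatticeNotions.

Section GraphNotions.
Variables (T : finType) (e : rel T) (V : {set T}).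

Definition walk_len (k : nat) (u v : T) : bool :=
  [exists p : k.-tuple T, path e u p && (last u p == v)].

(* graph distance; #|T| (larger than any finite distance) plays the role of
   infinity when v is unreachable from u *)
Definition gdist (u v : T) : nat := find (fun k => walk_len k u v) (iota 0 #|T|).

Definition max_dist (u v : T) : Prop :=
  forall w, e u w -> gdist v w <= gdist u v.

Definition mmd (u v : T) : Prop :=
  u \in V /\ v \in V /\ max_dist u v /\ max_dist v u.

Definition SR_vertex (u : T) : Prop := exists v, mmd u v.

Definition SR_adj (u v : T) : Prop := SR_vertex u /\ SR_vertex v /\ u <> v /\ mmd u v.
End GraphNotions.

Section BlowUp.
Variables (n : nat) (k : {set 'I_n} -> nat).

(* chain sizes: 0 = set0 and 1 = setT are kept as singletons, every other x
   is replaced by a chain C_x of size k x (assumed positive in the theorem) *)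
Definition csize (x : {set 'I_n}) : nat :=
  if (x == set0) || (x == setT) then 1 else k x.

(* element (x, i) : i-th element (bottom-up) of the chain C_x *)
Definition blowup := {x : {set 'I_n} & 'I_(csize x)}.

Definition bu_le : rel blowup := fun a b =>
  if tag a == tag b then (val (tagged a) <= val (tagged b))%N
  else tag a \proper tag b.

Lemma csize_set0 : 0 < csize set0.
Proof. by rewrite /csize eqxx. Qed.

Definition bu0 : blowup := Tagged (fun x => 'I_(csize x)) (Ordinal csize_set0).
End BlowUp.

(* In the blow-up, a /\ b = 0 iff the underlying subsets tag a and tag b are
   disjoint, so G^c only sees these subsets: its vertices lie over the proper
   nonempty subsets, distinct vertices are adjacent iff their subsets meet, and
   [x] = [y] iff tag x = tag y.  For n >= 3 two vertices over disjoint subsets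
   have a common neighbour over {i, j}, so G^c has diameter 2; hence
   nonadjacent vertices are mutually maximally distant (in particular x and any
   vertex over the complement of tag x).  Vertices over the same subset are
   adjacent twins, hence mutually maximally distant.  If x and y are adjacent
   and i \in tag x \ tag y, the bottom of the chain over {i} is a neighbour
   of x at distance 2 from y, so x is not maximally distant from y. *)
From mathcomp Require Import all_boot.
Set Implicit Arguments. Unset Strict Implicit. Unset Printing Implicit Defensive.

Lemma mem_not_disjoint (T : finType) (A B : {set T}) i :
  i \in A -> i \in B -> ~~ [disjoint A & B].
Proof. by move=> iA iB; apply/negP => /disjointFr/(_ iA); rewrite iB. Qed.

Lemma mmd_sym (T : finType) (e : rel T) (V : {set T}) u v :
  mmd e V u v -> mmd e V v u.
Proof. by case=> uV [vV [muv mvu]]. Qed.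

Lemma SR_adjP (T : finType) (e : rel T) (V : {set T}) u v :
  SR_adj e V u v <-> u != v /\ mmd e V u v.
Proof.
split=> [[_ [_ [/eqP neq_uv m]]] //|[/eqP neq_uv m]].
by split; [exists v | split; [exists u; apply: mmd_sym | ]].
Qed.

Section GraphDistance.
Variables (T : finType) (e : rel T).

Lemma walk_len0 u v : walk_len e 0 u v = (u == v).
Proof.
apply/existsP/idP => [[p]|/eqP->]; first by rewrite tuple0 /=.
by exists [tuple]; rewrite /= eqxx.
Qed.

Lemma walk_len1 u v : walk_len e 1 u v = e u v.
Proof.
apply/existsP/idP => [[[[|w [|? ?]] /= _]]|uv] //=.
  by rewrite andbT => /andP [uw /eqP <-].
by exists [tuple v]; rewrite /= uv eqxx.
Qed.

Lemma walk_len2 u w v : e u w -> e w v -> walk_len e 2 u v.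
Proof. by move=> uw wv; apply/existsP; exists [tuple w; v]; rewrite /= uw wv eqxx. Qed.

Lemma gdist_le m u v : m < #|T| -> walk_len e m u v -> gdist e u v <= m.
Proof.
move=> mT walk; rewrite leqNgt; apply/negP => /(before_find 0).
by rewrite nth_iota // walk.
Qed.

Lemma gdist_ge m u v :
  m <= #|T| -> (forall j, j < m -> ~~ walk_len e j u v) -> m <= gdist e u v.
Proof.
move=> mT nowalk; rewrite leqNgt; apply/negP => lt_dm.
have hasw : has (fun j => walk_len e j u v) (iota 0 #|T|).
  by rewrite has_find size_iota (leq_trans lt_dm mT).
move: (nth_find 0 hasw); rewrite nth_iota ?(leq_trans lt_dm mT) //.
by rewrite (negbTE (nowalk _ lt_dm)).
Qed.

Lemma gdist_refl u : gdist e u u = 0.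
Proof.
apply/eqP; rewrite -leqn0 gdist_le ?walk_len0 //.
by apply/card_gt0P; exists u.
Qed.

Hypothesis e_irr : irreflexive e.

Lemma gdist_adj u v : e u v -> gdist e u v = 1.
Proof.
move=> uv; have neq_uv : u != v by apply: contraTneq uv => ->; rewrite e_irr.
have T_gt1 : 1 < #|T| by apply/card_gt1P; exists u, v; split.
apply/eqP; rewrite eqn_leq gdist_le ?walk_len1 //=.
by apply: gdist_ge (ltnW T_gt1) _ => [[|//]] _; rewrite walk_len0.
Qed.

Lemma gdist_nonadj u v : u != v -> ~~ e u v -> 2 <= gdist e u v.
Proof.
move=> neq_uv nuv; apply: gdist_ge; first by apply/card_gt1P; exists u, v; split.
by case=> [|[|//]] _; rewrite ?walk_len0 ?walk_len1.
Qed.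

Lemma gdist_le2 u w v : e u w -> e w v -> gdist e u v <= 2.
Proof.
move=> uw wv; case: (eqVneq u v) => [->|neq_uv]; first by rewrite gdist_refl.
have neq_wu : w != u by apply: contraTneq uw => ->; rewrite e_irr.
have neq_wv : w != v by apply: contraTneq wv => ->; rewrite e_irr.
apply: gdist_le (walk_len2 uw wv).
by apply/card_gt2P; exists u, v, w; rewrite neq_uv neq_wu (eq_sym v) neq_wv.
Qed.

Lemma max_dist_twin u v :
  e u v -> (forall w, e u w -> w != v -> e v w) -> max_dist e u v.
Proof.
move=> uv twin w uw; rewrite (gdist_adj uv).
by case: (eqVneq w v) => [->|wv]; rewrite ?gdist_refl // gdist_adj // twin.
Qed.

Lemma not_max_dist u v w :
  e u v -> e u w -> v != w -> ~~ e v w -> ~ max_dist e u v.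
Proof.
move=> uv uw vw nvw /(_ w uw); rewrite (gdist_adj uv).
by apply/negP; rewrite -ltnNge gdist_nonadj.
Qed.

Hypothesis e_sym : symmetric e.
Variable V : {set T}.
Hypothesis e_in_V : forall u v, e u v -> v \in V.
Hypothesis diam2 : {in V &, forall u v, gdist e u v <= 2}.

Lemma mmd_nonadj u v : u \in V -> v \in V -> u != v -> ~~ e u v -> mmd e V u v.
Proof.
move=> uV vV neq_uv nuv.
have far w x y :
    x \in V -> x != y -> ~~ e x y -> e y w -> gdist e x w <= gdist e y x.
  move=> xV nxy nexy yw; apply: leq_trans (diam2 xV (e_in_V yw)) _.
  by apply: gdist_nonadj; rewrite 1?eq_sym 1?e_sym.
do 2!split=> //; split=> w; last exact: far.
by apply: far; rewrite 1?eq_sym 1?e_sym.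
Qed.
End GraphDistance.

Section ZeroDivisorGraph.
Variables (T : finType) (le : rel T) (z : T).

Lemma meet0C a b : meet0 le z a b = meet0 le z b a.
Proof.
rewrite /meet0 /is_meet andbCA; congr [&& _, _ & _].
by apply: eq_forallb => c; rewrite andbC.
Qed.

Lemma Gc_adj_sym : symmetric (Gc_adj le z).
Proof. by move=> a b; rewrite /Gc_adj meet0C eq_sym andbCA. Qed.

Lemma Gc_adj_irr : irreflexive (Gc_adj le z).
Proof. by move=> a; rewrite /Gc_adj eqxx !andbF. Qed.

Lemma Gc_adj_Zstar a b : Gc_adj le z a b -> b \in Zstar le z.
Proof. by case/and4P. Qed.
End ZeroDivisorGraph.

Section BlowUpLattice.
Variables (n : nat) (k : {set 'I_n} -> nat).
Local Notation T := (blowup k).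
Local Notation le := (@bu_le n k).
Local Notation z := (@bu0 n k).

Lemma eq_bu0 (a : T) : tag a = set0 -> a = z.
Proof.
case: a => x i /= x0; subst x; congr Tagged; apply: val_inj => /=.
have csize0 : csize k set0 = 1 by rewrite /csize eqxx.
by have := ltn_ord i; rewrite {2}csize0 ltnS leqn0 => /eqP.
Qed.

Lemma bu_le_tag (a b : T) : le a b -> tag a \subset tag b.
Proof. by rewrite /bu_le; case: eqP => [ab _|_ /proper_sub]; rewrite ?ab. Qed.

Lemma bu0_le (a : T) : le z a.
Proof.
by rewrite /bu_le /=; case: eqP => // /eqP; rewrite properE sub0set subset0 eq_sym.
Qed.

Hypothesis hk : forall x : {set 'I_n}, x != set0 -> x != setT -> 0 < k x.

Lemma csize_gt0 (X : {set 'I_n}) : 0 < csize k X.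
Proof. by rewrite /csize; case: ifP => // /norP []; apply: hk. Qed.

Definition bu_bot (X : {set 'I_n}) : T :=
  Tagged (fun x => 'I_(csize k x)) (Ordinal (csize_gt0 X)).

Lemma bu_bot_le (X : {set 'I_n}) (a : T) : X \subset tag a -> le (bu_bot X) a.
Proof. by rewrite /bu_le /= properEneq; case: eqP. Qed.

Lemma bu_bot_eq0 (X : {set 'I_n}) : (bu_bot X == z) = (X == set0).
Proof. by apply/eqP/eqP => [/(congr1 tag)|X0]; last exact: eq_bu0. Qed.

Lemma meet0_bu (a b : T) : meet0 le z a b = [disjoint tag a & tag b].
Proof.
rewrite /meet0 /is_meet !bu0_le -setI_eq0 /=; apply/forallP/eqP => [zmax|ab0 c].
  have := zmax (bu_bot (tag a :&: tag b)).
  rewrite (bu_bot_le (subsetIl _ _)) (bu_bot_le (subsetIr _ _)) => /bu_le_tag.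
  by rewrite subset0 => /eqP.
apply/implyP => /andP [ca cb].
have : tag c \subset set0 by rewrite -ab0 subsetI !bu_le_tag.
by rewrite subset0 => /eqP /eq_bu0 ->; apply: bu0_le.
Qed.

Lemma Zstar_bu (a : T) : (a \in Zstar le z) = (tag a != set0) && (tag a != setT).
Proof.
rewrite inE; case: (eqVneq (tag a) set0) => [/eq_bu0 ->|a0]; first by rewrite eqxx.
have -> /= : a != z by apply: contra_neq a0 => ->.
apply/existsP/idP => [[b /andP [bz]]|aT].
  rewrite meet0_bu => dis; apply: contraNneq bz => aT; apply/eqP/eq_bu0.
  by move: dis; rewrite aT -setI_eq0 setTI => /eqP.
exists (bu_bot (~: tag a)).
rewrite meet0_bu bu_bot_eq0 -setCT (inj_eq (@setC_inj _)) aT /=.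
by rewrite disjoints_subset setCK.
Qed.

Lemma same_class_bu (x y : T) : same_class le z x y = (tag x == tag y).
Proof.
apply/eqP/eqP => [/setP perpE|xy]; last first.
  by apply/setP => b; rewrite !inE !meet0_bu xy.
apply/setP => i; move: (perpE (bu_bot [set i])).
rewrite !inE !meet0_bu /= ![[disjoint _ & [set i]]]disjoint_sym !disjoints1.
by move/negb_inj.
Qed.

Lemma Gc_adj_bu (a b : T) : Gc_adj le z a b =
  [&& a \in Zstar le z, b \in Zstar le z, a != b & ~~ [disjoint tag a & tag b]].
Proof. by rewrite /Gc_adj meet0_bu. Qed.
End BlowUpLattice.

Section BlowUpGraph.
Variables (n : nat) (k : {set 'I_n} -> nat).
Hypothesis hn : 3 <= n.
Hypothesis hk : forall x : {set 'I_n}, x != set0 -> x != setT -> 0 < k x.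
Local Notation T := (blowup k).
Local Notation G := (Gc_adj (@bu_le n k) (@bu0 n k)).
Local Notation V := (Zstar (@bu_le n k) (@bu0 n k)).
Local Notation bu_bot := (bu_bot hk).

Lemma bu_bot_Zstar (X : {set 'I_n}) : X != set0 -> #|X| < n -> bu_bot X \in V.
Proof.
move=> X0 Xn; rewrite (Zstar_bu hk) /= X0 /=.
by apply: contraTneq Xn => ->; rewrite cardsT card_ord ltnn.
Qed.

Lemma gdist_bu_le2 (a b : T) : a \in V -> b \in V -> gdist G a b <= 2.
Proof.
move=> aV bV; case: (eqVneq a b) => [->|neq_ab]; first by rewrite gdist_refl.
have [dab|/negPn dab] := boolP (~~ [disjoint tag a & tag b]).
  by rewrite gdist_adj ?(Gc_adj_bu hk) ?aV ?bV ?neq_ab //; apply: Gc_adj_irr.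
move: (aV) (bV); rewrite !(Zstar_bu hk).
move=> /andP [/set0Pn [i ia] _] /andP [/set0Pn [j jb] _].
have ja : j \notin tag a by rewrite (disjointFl dab jb).
have ib : i \notin tag b by rewrite (disjointFr dab ia).
have ij : i != j by apply: contraNneq ja => <-.
have wi : i \in [set i; j] by rewrite !inE eqxx.
have wj : j \in [set i; j] by rewrite !inE eqxx orbT.
have wV : bu_bot [set i; j] \in V.
  by apply: bu_bot_Zstar; [apply/set0Pn; exists i | rewrite cards2 ij].
apply: (gdist_le2 (@Gc_adj_irr _ _ _) (w := bu_bot [set i; j])).
  rewrite (Gc_adj_bu hk) aV wV (mem_not_disjoint ia wi) andbT /=.
  by apply: contraNneq ja => ->.
rewrite (Gc_adj_bu hk) bV wV (mem_not_disjoint wj jb) andbT /=.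
by apply: contraNneq ib => <-.
Qed.

Lemma mmd_bu_disjoint (a b : T) :
  a \in V -> b \in V -> [disjoint tag a & tag b] -> mmd G V a b.
Proof.
move=> aV bV dab.
apply: (mmd_nonadj (@Gc_adj_sym _ _ _) (@Gc_adj_Zstar _ _ _) gdist_bu_le2 aV bV).
- move: aV; rewrite (Zstar_bu hk) => /andP [/set0Pn [i ia] _].
  by apply: contraTneq dab => <-; exact: (mem_not_disjoint ia ia).
- by rewrite (Gc_adj_bu hk) dab !andbF.
Qed.

Lemma SR_vertex_bu (a : T) : SR_vertex G V a <-> a \in V.
Proof.
split=> [[b []] //|aV]; exists (bu_bot (~: tag a)).
move: (aV); rewrite (Zstar_bu hk) => /andP [a0 aT].
have bV : bu_bot (~: tag a) \in V.
  rewrite (Zstar_bu hk) /= -setCT -[X in _ && (_ != X)]setC0.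
  by rewrite !(inj_eq (@setC_inj _)) aT a0.
by apply: mmd_bu_disjoint; rewrite //= disjoints_subset setCK.
Qed.

Lemma mmd_bu_same_tag (x y : T) :
  x \in V -> y \in V -> x != y -> tag x = tag y -> mmd G V x y.
Proof.
move=> xV yV neq_xy txy.
have twin (u v : T) :
    u \in V -> v \in V -> u != v -> tag u = tag v -> max_dist G u v.
  move=> uV vV neq_uv tuv; apply: max_dist_twin; first exact: Gc_adj_irr.
    rewrite (Gc_adj_bu hk) uV vV neq_uv -tuv -setI_eq0 setIid /=.
    by move: uV; rewrite (Zstar_bu hk) => /andP [].
  move=> w; rewrite !(Gc_adj_bu hk) tuv vV => /and4P [_ -> _ ->] neq_wv.
  by rewrite eq_sym neq_wv.
by do 2!split=> //; split; apply: twin; rewrite // eq_sym.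
Qed.

Lemma not_max_dist_bu (x y : T) :
  G x y -> ~~ (tag x \subset tag y) -> ~ max_dist G x y.
Proof.
move=> Gxy /subsetPn [i ix iy].
have := Gxy; rewrite (Gc_adj_bu hk) => /and4P [xV yV _ dxy].
have wi : i \in [set i] by rewrite inE.
have wV : bu_bot [set i] \in V.
  by apply: bu_bot_Zstar; [apply/set0Pn; exists i | rewrite cards1 ltnW].
apply: (not_max_dist (@Gc_adj_irr _ _ _) Gxy (w := bu_bot [set i])).
- rewrite (Gc_adj_bu hk) xV wV (mem_not_disjoint ix wi) andbT /=.
  by apply: contraNneq dxy => -> /=; rewrite disjoints1.
- by apply: contraNneq iy => ->.
- by rewrite (Gc_adj_bu hk) /= disjoint_sym disjoints1 iy !andbF.
Qed.

Lemma not_mmd_bu (x y : T) : G x y -> tag x != tag y -> ~ mmd G V x y.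
Proof.
move=> Gxy txy [_ [_ [mxy myx]]].
have [sxy|nsxy] := boolP (tag x \subset tag y); last exact: not_max_dist_bu nsxy mxy.
apply: not_max_dist_bu myx; first by rewrite Gc_adj_sym.
by apply: contra txy => syx; rewrite eqEsubset sxy.
Qed.
End BlowUpGraph.

Theorem lemma3p16 (n : nat) (k : {set 'I_n} -> nat)
  (hn : 3 <= n)
  (hk : forall x : {set 'I_n}, x != set0 -> x != setT -> 0 < k x) :
  let le := @bu_le n k in
  let z := @bu0 n k in
  let G := Gc_adj le z in
  let V := Zstar le z in
  (* (1) V(G_SR) = V(G) *)
  (forall x : @blowup n k, SR_vertex G V x <-> x \in V) /\
  (* (2) *)
  (forall x y : @blowup n k, SR_vertex G V x -> SR_vertex G V y ->
     x <> y -> same_class le z x y -> SR_adj G V x y) /\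
  (* (3) *)
  (forall x y : @blowup n k, SR_vertex G V x -> SR_vertex G V y ->
     ~~ same_class le z x y -> (SR_adj G V x y <-> ~~ G x y)).
Proof.
cbv zeta; have SR_V := SR_vertex_bu hn hk.
split; first exact: SR_V.
split=> x y /SR_V xV /SR_V yV; rewrite (same_class_bu hk).
  move=> /eqP neq_xy /eqP txy; apply/SR_adjP.
  by split; last exact: mmd_bu_same_tag.
move=> txy; split=> [/SR_adjP [_ mxy]|nGxy].
  by apply/negP => Gxy; apply: not_mmd_bu Gxy txy mxy.
have neq_xy : x != y by apply: contraNneq txy => ->.
apply/SR_adjP; split=> //; apply: mmd_bu_disjoint => //.
by move: nGxy; rewrite (Gc_adj_bu hk) xV yV neq_xy negbK.
Qed.
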